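(* Let $P:=\mathrm{conv}\{\rho_0,\rho_1,\ldots,\rho_n\}\subset N_\mathbb{R}$ be an $n$-simplex such that $\sum_{i=0}^n\lambda_i\rho_i=0$ for some $\lambda_0,\ldots,\lambda_n\in\mathbb{Z}_{>0}$. Let $h:=\sum_{i=0}^n\lambda_i$ and $k:=|N\cap P^\circ|$, where $P^\circ$ is the interior of $P$. Then $$\mathrm{vol}\,P\leq\frac{k\,h^n}{n!\,\lambda_1\lambda_2\cdots\lambda_n}.$$
   Context: $N\cong\mathbb{Z}^n$ is a lattice and $N_\mathbb{R}:=N\otimes_\mathbb{Z}\mathbb{R}$. Volume is taken relative to the lattice $N$, i.e. normalised so that a fundamental parallelepiped of $N$ has volume $1$. *)

From HB Require Import structures.
From mathcomp Require Import all_boot all_order all_algebra.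
Set Implicit Arguments. Unset Strict Implicit. Unset Printing Implicit Defensive.
Import Order.TTheory GRing.Theory Num.Theory.
Local Open Scope ring_scope.

(* The lattice N = Z^n is 'rV[int]_n, and N_R is 'rV[R]_n for an ordered
   field R (the reals being the intended instance). *)

Definition toR (R : realFieldType) (n : nat) (v : 'rV[int]_n) : 'rV[R]_n :=
  map_mx (fun z : int => z%:~R) v.

Definition in_conv (R : realFieldType) (n m : nat)
    (rho : 'I_m -> 'rV[int]_n) (x : 'rV[R]_n) : Prop :=
  exists mu : 'I_m -> R,
    (forall i, 0 <= mu i) /\ \sum_(i < m) mu i = 1 /\
    x = \sum_(i < m) mu i *: toR R (rho i).

(* x lies in the (topological) interior P° of P: some open box (= open ball
   for the sup norm) around x is contained in P *)
Definition in_interior (R : realFieldType) (n m : nat)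
    (rho : 'I_m -> 'rV[int]_n) (x : 'rV[R]_n) : Prop :=
  exists2 eps : R, 0 < eps &
    forall y : 'rV[R]_n, (forall j, `|y 0 j - x 0 j| < eps) -> in_conv rho y.

(* rho_0,...,rho_n are affinely independent, i.e. P is an n-simplex *)
Definition affinely_independent (R : realFieldType) (n m : nat)
    (rho : 'I_m -> 'rV[int]_n) : Prop :=
  forall mu : 'I_m -> R,
    \sum_(i < m) mu i = 0 -> \sum_(i < m) mu i *: toR R (rho i) = 0 ->
    forall i, mu i = 0.

Definition simplex_vol (R : realFieldType) (n : nat)
    (rho : 'I_n.+1 -> 'rV[int]_n) : R :=
  `|\det (\matrix_(i < n, j < n)
          (toR R (rho (lift ord0 i)) 0 j - toR R (rho ord0) 0 j))|
  / (n`!)%:R.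

From HB Require Import structures.
From mathcomp Require Import all_boot all_order all_algebra.
From mathcomp Require Import lra zify.
(* Let E be the matrix of edge vectors rho_i - rho_0, D = |det E| and h = sum_i lambda_i,
   so that vol P = D / n! and h (-rho_0) = (lambda_1, ..., lambda_n) E.  A lattice point
   with barycentric coordinates Z / (h D), where Z is a positive integer row with
   sum Z < h D, lies in the interior of P; such lattice points correspond to the Z with
   h D | Z E, a sublattice of index (h D)^n / D.  Pigeonholing the box
   prod_i [0, D lambda_i) into classes modulo this sublattice gives a class of at least
   D prod_i lambda_i / h^n rows; subtracting from them the row of largest coordinate sum
   and adding (D lambda_1, ..., D lambda_n) produces as many admissible Z, whence
   k >= D prod_i lambda_i / h^n. *)

Set Implicit Arguments. Unset Strict Implicit. Unset Printing Implicit Defensive.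
Import Order.TTheory GRing.Theory Num.Theory.
Local Open Scope ring_scope.

Lemma absz_modz_lt (m : nat) (x : int) : (0 < m)%N -> (absz (x %% m%:Z)%Z < m)%N.
Proof.
move=> m_gt0; have m_neq0 : m%:Z != 0 by rewrite eqz_nat -lt0n.
have := modz_ge0 x m_neq0; have := ltz_pmod x (m_gt0 : 0 < m%:Z); lia.
Qed.

Lemma absz_modz_inj (m : nat) (x y : int) : (0 < m)%N ->
  absz (x %% m%:Z)%Z = absz (y %% m%:Z)%Z -> (m%:Z %| x - y)%Z.
Proof.
move=> m_gt0 eqxy; rewrite -eqz_mod_dvd; apply/eqP.
have m_neq0 : m%:Z != 0 by rewrite eqz_nat -lt0n.
by have := modz_ge0 x m_neq0; have := modz_ge0 y m_neq0; lia.
Qed.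

Lemma absz_unit (x : int) : x \is a GRing.unit -> absz x = 1%N.
Proof.
move=> x_unit; have := congr1 absz (mulrV x_unit); rewrite abszM => /eqP.
by rewrite muln_eq1 => /andP[/eqP].
Qed.

Lemma sublattice_classes (n : nat) (E : 'M[int]_n) (N : nat) :
  (0 < N)%N -> (absz (\det E) %| N)%N ->
  exists2 m : 'I_n -> nat, (\prod_i m i * absz (\det E) = N ^ n)%N &
  exists key : 'rV[int]_n -> {dffun forall i, 'I_(m i)},
    forall b b', key b = key b' -> forall j, (N%:Z %| ((b - b') *m E) 0%R j)%Z.
Proof.
move=> N_gt0 detE_dvdN.
(* With E = L diag(d) M in Smith form, the class of b is read off (b L)_i mod N / |d_i|. *)
have [L L_unit [M M_unit [s _ defE]]] := int_Smith_normal_form E.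
pose d : 'rV[int]_n := \row_i s`_i.
have {defE} defE : E = L *m diag_mx d *m M.
  by rewrite defE; congr (_ *m _ *m _); apply/matrixP => i j; rewrite !mxE.
have detE : absz (\det E) = (\prod_i absz (d 0%R i))%N.
  rewrite defE !det_mulmx det_diag !abszM (absz_unit L_unit) (absz_unit M_unit).
  by rewrite mul1n muln1 (big_morph absz abszM (erefl _)).
have d_dvdN i : (absz (d 0%R i) %| N)%N.
  by apply: dvdn_trans detE_dvdN; rewrite detE (bigD1 i) //= dvdn_mulr.
pose m i := (N %/ absz (d 0%R i))%N.
have mK i : (m i * absz (d 0%R i))%N = N by rewrite divnK.
have m_gt0 i : (0 < m i)%N by move: N_gt0; rewrite -(mK i) muln_gt0 => /andP[].
exists m.
  by rewrite detE -big_split /= (eq_bigr (fun=> N)) ?prod_nat_const ?card_ord.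
exists (fun b => [ffun i => Ordinal (absz_modz_lt ((b *m L) 0 i) (m_gt0 i))]).
move=> b b' /ffunP eq_key j.
have m_dvd i : ((m i)%:Z %| ((b - b') *m L) 0%R i)%Z.
  by rewrite mulmxBl mxE [X in _ + X]mxE; apply: absz_modz_inj => //;
    move: (eq_key i); rewrite !ffunE => -[].
rewrite defE !mulmxA mul_mx_diag mxE; apply: rpred_sum => i _; rewrite [X in X * _]mxE.
by apply: dvdz_mulr; rewrite -(mK i) PoszM dvdz_mul // dvdzE.
Qed.

Lemma pigeonhole_fiber (A B : finType) (f : A -> B) (a0 : A) :
  exists y, (#|A| <= #|B| * #|[set x | f x == y]|)%N.
Proof.
pose fiber y := #|[set x | f x == y]|.
have [y _ y_max] := @arg_maxnP B (f a0) xpredT fiber isT.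
exists y; rewrite -sum_nat_const -[#|A|]sum1_card (partition_big f xpredT) //=.
apply: leq_sum => z _; apply: leq_trans (y_max z isT).
by rewrite /fiber -sum1_card; under [X in (_ <= X)%N]eq_bigl do rewrite inE.
Qed.

Lemma card_box (n : nat) (a : 'I_n -> nat) :
  #|{dffun forall i, 'I_(a i)}| = (\prod_i a i)%N.
Proof.
rewrite card_dep_ffun foldr_map -big_enum /=.
by elim: (enum 'I_n) => [|i s IH]; rewrite ?big_nil ?big_cons //= IH card_ord.
Qed.

Definition box_row (n : nat) (a : 'I_n -> nat) (b : {dffun forall i, 'I_(a i)}) :
  'rV[int]_n := \row_i (b i : nat)%:Z.

Lemma box_row_inj (n : nat) (a : 'I_n -> nat) : injective (@box_row n a).
Proof.
move=> b b' /rowP eq_b; apply/ffunP => i; apply: val_inj.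
by move: (eq_b i); rewrite !mxE => -[].
Qed.

Lemma congruent_box_subset (n : nat) (E : 'M[int]_n) (N : nat) (a : 'I_n -> nat) :
  (0 < N)%N -> (absz (\det E) %| N)%N -> (forall i, 0 < a i)%N ->
  exists F : {set {dffun forall i, 'I_(a i)}},
    (absz (\det E) * \prod_i a i <= #|F| * N ^ n)%N /\
    {in F &, forall b b' j, (N%:Z %| ((box_row b - box_row b') *m E) 0%R j)%Z}.
Proof.
move=> N_gt0 detE_dvdN a_gt0.
have [m card_m [key key_cong]] := sublattice_classes N_gt0 detE_dvdN.
have [y card_fiber] :=
  pigeonhole_fiber (key \o @box_row n a) [ffun i => Ordinal (a_gt0 i)].
exists [set b | key (box_row b) == y]; split.
  rewrite -card_m -!card_box [X in (_ <= X)%N]mulnC mulnAC.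
  by rewrite [X in (X <= _)%N]mulnC leq_mul2r; apply/orP; right.
move=> b b'; rewrite !inE => /eqP key_b /eqP key_b'.
by apply: key_cong; rewrite key_b key_b'.
Qed.

Lemma shifted_congruent_rows (n : nat) (E : 'M[int]_n) (N : nat) (a : 'I_n -> nat)
    (F : {set {dffun forall i, 'I_(a i)}}) :
  F != set0 ->
  {in F &, forall b b' j, (N%:Z %| ((box_row b - box_row b') *m E) 0%R j)%Z} ->
  exists s : seq 'rV[int]_n,
    [/\ uniq s, size s = #|F| &
     forall Z, Z \in s -> [/\ forall i, 0 < Z 0 i, \sum_i Z 0 i <= (\sum_i a i)%:Z &
       forall j, (N%:Z %| ((Z - \row_i (a i)%:Z) *m E) 0%R j)%Z]].
Proof.
case/set0Pn=> b1 b1F F_cong.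
pose sum_box (b : {dffun forall i, 'I_(a i)}) := (\sum_i b i)%N.
have [b0 b0F b0_max] := @arg_maxnP _ b1 (mem F) sum_box b1F.
pose shift (b : {dffun forall i, 'I_(a i)}) := box_row b - box_row b0 + \row_i (a i)%:Z.
exists [seq shift b | b <- enum F]; split.
- rewrite map_inj_uniq ?enum_uniq // => b b'.
  by rewrite /shift => /addIr/addIr/box_row_inj.
- by rewrite size_map cardE.
move=> _ /mapP[b + ->]; rewrite mem_enum => bF; split.
- move=> i; rewrite !mxE; have := ltn_ord (b0 i).
  by move: (b i : nat) (b0 i : nat) => x y; lia.
- rewrite (eq_bigr (fun i => (b i)%:Z - (b0 i)%:Z + (a i)%:Z)); last first.
    by move=> i _; rewrite !mxE.
  rewrite !big_split /= sumrN -!(big_morph Posz PoszD (erefl 0%:Z)).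
  rewrite -/(sum_box b) -/(sum_box b0).
  by have := b0_max b bF; rewrite /geq; lia.
- by move=> j; rewrite /shift addrK; exact: F_cong.
Qed.

Lemma mulmx_det_inj (R : idomainType) (m n : nat) (A : 'M[R]_n) :
  \det A != 0 -> injective (fun u : 'M[R]_(m, n) => u *m A).
Proof.
move=> detA u v /(congr1 (mulmx^~ (\adj A))) /=.
rewrite -!mulmxA mul_mx_adj !mul_mx_scalar => /matrixP eq_uv.
by apply/matrixP => i j; move: (eq_uv i j); rewrite !mxE => /(mulfI detA).
Qed.

Definition edge_mx (n : nat) (rho : 'I_n.+1 -> 'rV[int]_n) : 'M[int]_n :=
  \matrix_(i, j) (rho (lift ord0 i) 0 j - rho ord0 0 j).

Lemma sum_norm_mulmx_le (F : numDomainType) (m k : nat) (v : 'rV[F]_m)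
    (M : 'M[F]_(m, k)) (e : F) :
  (forall j, `|v 0 j| <= e) -> \sum_i `|(v *m M) 0 i| <= e * \sum_i \sum_j `|M j i|.
Proof.
move=> v_le; rewrite mulr_sumr; apply: ler_sum => i _; rewrite mxE mulr_sumr.
apply: le_trans (ler_norm_sum _ _ _) _; apply: ler_sum => j _.
by rewrite normrM ler_wpM2r.
Qed.

Section Barycentric.
Variables (R : realFieldType) (n : nat) (rho : 'I_n.+1 -> 'rV[int]_n).

Local Notation ER := (map_mx intr (edge_mx rho) : 'M[R]_n).

Lemma row_edge_mx i : row i ER = toR R (rho (lift ord0 i)) - toR R (rho ord0).
Proof. by apply/rowP => j; rewrite !mxE intrB. Qed.

Lemma simplex_volE :
  simplex_vol R rho = (absz (\det (edge_mx rho)))%:R / (n`!)%:R.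
Proof.
rewrite /simplex_vol natr_absz intr_norm -det_map_mx.
by congr (`|\det _| / _); apply/matrixP => i j; rewrite !mxE rmorphB.
Qed.

Definition bary_ext (a : R) (beta : 'rV[R]_n) (j : 'I_n.+1) : R :=
  if unlift ord0 j is Some i then beta 0 i else a - \sum_i beta 0 i.

Lemma bary_ext0 a beta : bary_ext a beta ord0 = a - \sum_i beta 0 i.
Proof. by rewrite /bary_ext unlift_none. Qed.

Lemma bary_ext_lift a beta i : bary_ext a beta (lift ord0 i) = beta 0 i.
Proof. by rewrite /bary_ext liftK. Qed.

Lemma sum_bary_ext a beta : \sum_j bary_ext a beta j = a.
Proof.
rewrite big_ord_recl bary_ext0 (eq_bigr _ (fun i _ => bary_ext_lift a beta i)).
by rewrite subrK.
Qed.

Lemma bary_ext_comb a beta :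
  \sum_j bary_ext a beta j *: toR R (rho j) = a *: toR R (rho ord0) + beta *m ER.
Proof.
rewrite big_ord_recl mulmx_sum_row.
under eq_bigr do rewrite bary_ext_lift.
rewrite bary_ext0.
under [in RHS]eq_bigr do rewrite row_edge_mx scalerBr.
by rewrite sumrB -scaler_suml scalerBl addrAC addrA.
Qed.

Lemma in_conv_coords (beta : 'rV[R]_n) :
  (forall i, 0 <= beta 0 i) -> \sum_i beta 0 i <= 1 ->
  in_conv rho (toR R (rho ord0) + beta *m ER).
Proof.
move=> beta_ge0 beta_sum; exists (bary_ext 1 beta); split; last split.
- by move=> j; rewrite /bary_ext; case: unliftP => [i _|_]; rewrite ?subr_ge0.
- exact: sum_bary_ext.
- by rewrite bary_ext_comb scale1r.
Qed.

Lemma det_edge_mx_neq0 : affinely_independent R rho -> \det (edge_mx rho) != 0.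
Proof.
move=> rho_indep; apply/negP => /eqP det0.
have /det0P[c c_neq0 cE0] : \det ER == 0 by rewrite det_map_mx det0 rmorph0.
have := rho_indep (bary_ext 0 c) (sum_bary_ext 0 c).
rewrite bary_ext_comb scale0r add0r cE0 => /(_ erefl) bary0.
apply/negP: c_neq0; rewrite negbK; apply/eqP/rowP => i.
by rewrite -(bary_ext_lift 0) bary0 mxE.
Qed.

Lemma unitmx_edge_mx : \det (edge_mx rho) != 0 -> ER \in unitmx.
Proof. by move=> detE; rewrite unitmxE det_map_mx unitfE intr_eq0. Qed.

Lemma in_interior_coords (delta : R) (beta : 'rV[R]_n) :
  ER \in unitmx -> 0 < delta ->
  (forall i, delta <= beta 0 i) -> \sum_i beta 0 i <= 1 - delta ->
  in_interior rho (toR R (rho ord0) + beta *m ER).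
Proof.
move=> ER_unit delta_gt0 beta_ge beta_sum.
set S := \sum_i \sum_j `|invmx ER j i|.
have S_ge0 : 0 <= S by rewrite sumr_ge0 // => i _; rewrite sumr_ge0.
have S1_gt0 : 0 < 1 + S by rewrite ltr_pwDl.
exists (delta / (1 + S)); first by rewrite divr_gt0.
set x := _ + _ => y y_near; pose c := (y - x) *m invmx ER.
have c_small : \sum_i `|c 0 i| < delta.
  have yx_small j : `|(y - x) 0 j| <= delta / (1 + S).
    by move: (y_near j); rewrite !mxE => /ltW.
  apply: le_lt_trans (sum_norm_mulmx_le _ yx_small) _.
  by rewrite -mulrA gtr_pMr // -/S mulrC ltr_pdivrMr // mul1r ltrDr ltr01.
have c_le i : `|c 0 i| < delta.
  apply: le_lt_trans c_small; rewrite (bigD1 i) //= lerDl.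
  by rewrite sumr_ge0.
have sum_c : \sum_i c 0 i <= \sum_i `|c 0 i|.
  by apply: ler_sum => i _; exact: ler_norm.
have -> : y = toR R (rho ord0) + (beta + c) *m ER.
  by rewrite mulmxDl mulmxKV // addrA -/x addrC subrK.
apply: in_conv_coords => [i|].
  have := c_le i; have := beta_ge i; have := ler_norm (- c 0 i).
  rewrite normrN !mxE; lra.
rewrite (eq_bigr (fun i => beta 0 i + c 0 i)) ?big_split /=; last by move=> i _; rewrite mxE.
lra.
Qed.

Lemma in_interior_lattice (H : nat) (Z u : 'rV[int]_n) :
  \det (edge_mx rho) != 0 -> (0 < H)%N ->
  (forall i, 0 < Z 0 i) -> \sum_i Z 0 i < H%:Z ->
  H%:Z *: (u - rho ord0) = Z *m edge_mx rho -> in_interior rho (toR R u).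
Proof.
move=> detE H_gt0 Z_gt0 Z_sum uZ.
have H_gt0' : (0 : R) < H%:R by rewrite ltr0n.
have -> : toR R u = toR R (rho ord0) + (H%:R^-1 *: toR R Z) *m ER.
  have := congr1 (map_mx (intr : int -> R)) uZ; rewrite map_mxM map_mxZ map_mxB /= => uZR.
  by rewrite -scalemxAl -uZR scalerA mulVf ?gt_eqF // scale1r addrC subrK.
apply: (in_interior_coords (delta := H%:R^-1)).
- exact: unitmx_edge_mx.
- by rewrite invr_gt0.
- by move=> i; rewrite !mxE ler_pMr ?invr_gt0 // ler1z -gtz0_ge1.
have Z_sum' : (\sum_i Z 0 i)%:~R <= H%:R - 1 :> R.
  have : \sum_i Z 0 i + 1 <= H%:Z by rewrite lezD1.
  by rewrite -(ler_int R) intrD -pmulrn; lra.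
rewrite (eq_bigr (fun i => H%:R^-1 * (Z 0 i)%:~R)); last by move=> i _; rewrite !mxE.
rewrite -mulr_sumr -rmorph_sum; apply: le_trans (ler_wpM2l _ Z_sum') _.
  by rewrite invr_ge0 ltW.
by rewrite mulrBr mulVf ?gt_eqF // mulr1.
Qed.
End Barycentric.

Section LatticeSimplex.
Variables (n : nat) (rho : 'I_n.+1 -> 'rV[int]_n) (lambda : 'I_n.+1 -> nat).
Hypotheses (lambda_gt0 : forall i, (0 < lambda i)%N)
  (lambda_rel : \sum_(i < n.+1) (lambda i)%:Z *: rho i = 0)
  (detE_neq0 : \det (edge_mx rho) != 0).

Local Notation E := (edge_mx rho).
Local Notation D := (absz (\det (edge_mx rho))).
Local Notation h := (\sum_(i < n.+1) lambda i)%N.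
Local Notation lam i := (lambda (lift ord0 i)).

Lemma weights_mul_edge_mx : \row_i (lam i)%:Z *m E = h%:Z *: (- rho ord0).
Proof.
have rel0 : (lambda ord0)%:Z *: rho ord0 = - \sum_i (lam i)%:Z *: rho (lift ord0 i).
  by apply/eqP; rewrite -addr_eq0; have := lambda_rel; rewrite big_ord_recl => ->.
rewrite mulmx_sum_row (eq_bigr (fun i => (lam i)%:Z *: rho (lift ord0 i) - (lam i)%:Z *: rho ord0)).
  rewrite sumrB -scaler_suml big_ord_recl PoszD scalerDl !scalerN rel0 opprK.
  by rewrite (big_morph Posz PoszD (erefl 0%:Z)).
by move=> i _; rewrite mxE -scalerBr; congr (_ *: _); apply/rowP => j; rewrite !mxE.
Qed.

Let D_gt0 : (0 < D)%N. Proof. by rewrite absz_gt0. Qed.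

Let h_gt0 : (0 < h)%N. Proof. by rewrite big_ord_recl addn_gt0 lambda_gt0. Qed.

Let hD_gt0 : (0 < h * D)%N. Proof. by rewrite muln_gt0 h_gt0 D_gt0. Qed.

Lemma many_interior_coords : exists s : seq 'rV[int]_n,
  [/\ uniq s, (D * \prod_i lam i <= size s * h ^ n)%N &
   forall Z, Z \in s -> [/\ forall i, 0 < Z 0 i, \sum_i Z 0 i < (h * D)%N%:Z &
     forall j, ((h * D)%N%:Z %| (Z *m E) 0%R j)%Z]].
Proof.
have a_gt0 i : (0 < D * lam i)%N by rewrite muln_gt0 D_gt0 lambda_gt0.
have [F [card_F F_cong]] :=
  congruent_box_subset hD_gt0 (dvdn_mull _ (dvdnn D)) a_gt0.
have card_F' : (D * \prod_i lam i <= #|F| * h ^ n)%N.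
  move: card_F; rewrite big_split /= prod_nat_const card_ord expnMn.
  rewrite mulnCA [X in (_ <= X)%N]mulnA [X in (X <= _)%N]mulnC.
  by rewrite leq_pmul2r // expn_gt0 D_gt0.
have F_neq0 : F != set0.
  have : (0 < #|F| * h ^ n)%N.
    by apply: leq_trans card_F'; rewrite muln_gt0 D_gt0 prodn_gt0.
  by rewrite muln_gt0 card_gt0 => /andP[].
have [s [s_uniq s_size s_rows]] := shifted_congruent_rows F_neq0 F_cong.
exists s; split => [//||Z /s_rows[Z_gt0 Z_sum Z_cong]]; first by rewrite s_size.
split => // [|j].
  move: Z_sum; rewrite -big_distrr big_ord_recl mulnDl /=.
  by have := lambda_gt0 ord0; lia.
rewrite -(subrK (\row_i (D * lam i)%:Z) Z) mulmxDl mxE; apply: rpredD; first exact: Z_cong.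
have -> : \row_i (D * lam i)%:Z = D%:Z *: \row_i (lam i)%:Z.
  by apply/rowP => i; rewrite !mxE PoszM.
by rewrite -scalemxAl weights_mul_edge_mx scalerA !mxE mulnC PoszM dvdz_mulr.
Qed.

Lemma size_interior_ge (R : realFieldType) (interior : seq 'rV[int]_n) :
  (forall v, in_interior rho (toR R v) -> v \in interior) ->
  (D * \prod_i lam i <= size interior * h ^ n)%N.
Proof.
move=> interior_complete.
have [s [s_uniq s_size s_rows]] := many_interior_coords.
apply: leq_trans s_size _; rewrite leq_mul2r; apply/orP; right.
pose u (Z : 'rV[int]_n) := rho ord0 + \row_j ((Z *m E) 0%R j %/ (h * D)%N%:Z)%Z.
have uZ Z : Z \in s -> (h * D)%N%:Z *: (u Z - rho ord0) = Z *m E.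
  case/s_rows => _ _ Z_cong; apply/rowP => j.
  by rewrite addrC addKr mxE [X in _ * X]mxE mulrC divzK.
rewrite -(size_map u); apply: uniq_leq_size.
  rewrite map_inj_in_uniq // => Z Z' sZ sZ' eq_u.
  by apply: (mulmx_det_inj detE_neq0); rewrite -uZ // -uZ // eq_u.
move=> _ /mapP[Z sZ ->]; apply: interior_complete.
have [Z_gt0 Z_sum _] := s_rows Z sZ.
exact: (in_interior_lattice R detE_neq0 hD_gt0 Z_gt0 Z_sum (uZ Z sZ)).
Qed.

End LatticeSimplex.

(* Duplicates in [interior] could only enlarge [size interior]. *)
Theorem mainTheorem5 (R : realFieldType) (n : nat)
    (rho : 'I_n.+1 -> 'rV[int]_n) (lambda : 'I_n.+1 -> nat)
    (interior : seq 'rV[int]_n) :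
  affinely_independent R rho ->
  (forall i, (0 < lambda i)%N) ->
  \sum_(i < n.+1) (lambda i)%:Z *: rho i = 0 ->
  uniq interior ->
  (forall v : 'rV[int]_n, v \in interior <-> in_interior rho (toR R v)) ->
  simplex_vol R rho <=
    (size interior)%:R * (\sum_(i < n.+1) lambda i)%:R ^+ n
    / ((n`!)%:R * \prod_(i < n) (lambda (lift ord0 i))%:R).
Proof.
move=> rho_indep lambda_gt0 lambda_rel _ interior_spec.
have detE := det_edge_mx_neq0 rho_indep.
have := size_interior_ge lambda_gt0 lambda_rel detE (fun v => (interior_spec v).2).
rewrite simplex_volE -natr_prod -(ler_nat R) !natrM natrX => count.
have fact_gt0 : (0 : R) < (n`!)%:R by rewrite ltr0n fact_gt0.
have prod_gt0 : (0 : R) < (\prod_i lambda (lift ord0 i))%:R.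
  by rewrite ltr0n prodn_gt0.
by rewrite ler_pdivlMr ?mulr_gt0 // mulrA divfK ?gt_eqF.
Qed.
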